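(* Let $s\ge1$ and $0\le k\le s$. Then $E(s,k)=\sum_{m=k}^{s}(-1)^{m+k}\binom{m}{k}O(s,m)$.
   Context: A $p$-string of length $s$ is a correctly matched string of $s$ pairs of parentheses; there are $C_s=\frac{1}{s+1}\binom{2s}{s}$ of them ($C_0=1$). Given $p$-strings $U$ (upper), $W$ (lower) of length $s$, the meander graph $\Gamma^1_{2s-1}$ is obtained by marking points $0,1,\dots,2s$ on the $x$-axis, taking the segment $[0,2s]$, joining points $a,b$ by an upper semicircle for each matched pair of $U$ at positions $a<b$ (positions $1,\dots,2s$), and points $a-1,b-1$ by a lower semicircle for each matched pair of $W$ at positions $a<b$; the vertices are $1,\dots,2s-1$. A pierced circle at position $i$ ($1\le i\le 2s-2$) is present if vertices $i,i+1$ are joined both by an upper and a lower semicircle. $E(s,k)$ is the number of pairs $(U,W)$ whose meander graph has exactly $k$ pierced circles. $O(s,k)=\binom{2s-k-1}{k}(C_{s-k})^2$, which equals the number of triples $(A,P,Q)$ where $A$ is a placement of $k$ pairwise vertex-disjoint pierced circles on the path graph with $2s-1$ vertices and $P,Q$ are $p$-strings of length $s-k$. *)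

From mathcomp Require Import all_boot all_order all_algebra.
Set Implicit Arguments. Unset Strict Implicit. Unset Printing Implicit Defensive.

(* A parenthesis string is a seq bool: true = '(' , false = ')'. *)

Fixpoint bal_aux (h : nat) (w : seq bool) : bool :=
  match w with
  | [::] => h == 0
  | true :: w' => bal_aux h.+1 w'
  | false :: w' => (0 < h) && bal_aux h.-1 w'
  end.

Definition balanced (w : seq bool) : bool := bal_aux 0 w.

Definition pstring (s : nat) (w : seq bool) : bool :=
  (size w == 2 * s) && balanced w.

Definition catalan (n : nat) : nat := 'C(2 * n, n) %/ n.+1.

(* Positions are 1-indexed (1..2s). (a,b) is a matched pair of w iff
   a < b, position a is '(', position b is ')', and the substring strictly
   between them is correctly matched. *)
Definition matched (w : seq bool) (a b : nat) : bool :=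
  [&& 0 < a, a < b, b <= size w,
      nth false w a.-1 == true, nth false w b.-1 == false
    & balanced (take (b - a).-1 (drop a w))].

(* Upper semicircle joins points a,b for each matched pair (a,b) of U;
   lower semicircle joins points a-1,b-1 for each matched pair (a,b) of W. *)
Definition upper_joined (U : seq bool) (x y : nat) : bool := matched U x y.
Definition lower_joined (W : seq bool) (x y : nat) : bool := matched W x.+1 y.+1.

(* pierced circle at i (1 <= i <= 2s-2): vertices i, i+1 joined by both an
   upper and a lower semicircle. *)
Definition pierced (U W : seq bool) (i : nat) : bool :=
  upper_joined U i i.+1 && lower_joined W i i.+1.

Definition num_pierced (s : nat) (U W : seq bool) : nat :=
  count (pierced U W) (iota 1 (2 * s - 2)).

Definition E (s k : nat) : nat :=
  #|[set UW : (2 * s).-tuple bool * (2 * s).-tuple bool |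
      [&& pstring s UW.1, pstring s UW.2
        & num_pierced s UW.1 UW.2 == k]]|.

Definition O (s k : nat) : nat := 'C(2 * s - k - 1, k) * (catalan (s - k)) ^ 2.

From mathcomp Require Import all_boot all_order all_algebra.
From mathcomp Require Import zify.
Import GRing.Theory.

(* Marking m of the pierced circles of a pair (U, W) amounts to choosing a set
   of m pairwise non-adjacent positions among the 2s-2 possible ones, and
   prescribing a factor "()" of U and a factor "()" of W (one step to the
   right) at each of them.  Deleting a prescribed "()" from a p-string leaves
   a p-string, so for each such set both U and W can be completed in C_{s-m}
   ways, and there are binom(2s-1-m, m) such sets.  Hence the sum over all
   pairs of binom(#pierced circles, m) is O(s, m), and binomial inversion
   recovers E(s, k).  The Catalan number itself comes from the reflection
   principle for ballot sequences. *)

Lemma count_sum T (P : pred T) r : count P r = \sum_(x <- r) P x.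
Proof. by rewrite -sumn_count sumnE big_map. Qed.

Section BinomialInversion.
Local Open Scope ring_scope.
Variable R : nzRingType.

Lemma coefXsub1_exp m k : (('X - 1) ^+ m : {poly R})`_k = (-1) ^+ (m + k) * 'C(m, k)%:R.
Proof.
elim: m k => [|m IHm] k; first by rewrite expr0 coef1; case: k => [|k]; rewrite ?mulr0 ?mulr1.
rewrite exprS mulrBl mul1r coefB coefXM !IHm; case: k => [|k].
  by rewrite sub0r !bin0 !addn0 exprS mulN1r mulNr.
by rewrite binS natrD mulrDr !addSn !addnS !exprS !mulN1r !mulNr !opprK succnK addrC.
Qed.

(* The coefficient of X^k in X^j = ((X - 1) + 1)^j. *)
Lemma alternating_binomial j k M : (j < M)%N ->
  \sum_(0 <= m < M) (-1) ^+ (m + k) * 'C(m, k)%:R * 'C(j, m)%:R = (j == k)%:R :> R.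
Proof.
move=> lt_jM; have := congr1 (coefp k) (exprD1n ('X - 1 : {poly R}) j).
rewrite subrK /= coefXn eq_sym => ->; rewrite coef_sum.
rewrite (big_ord_widen _ (fun m => (('X - 1) ^+ m *+ 'C(j, m))`_k) lt_jM).
rewrite big_mkord [in RHS]big_mkcond; apply: eq_bigr => m _.
case: (ltnP m j.+1) => [_ | lt_jm]; first by rewrite coefMn coefXsub1_exp mulr_natr.
by rewrite (bin_small lt_jm) mulr0.
Qed.

Lemma count_binomial_inversion (T : eqType) (r : seq T) (n : T -> nat) M k :
  {in r, forall x, n x < M}%N ->
  (count (fun x => n x == k) r)%:R =
  \sum_(0 <= m < M) (-1) ^+ (m + k) * 'C(m, k)%:R * (\sum_(x <- r) 'C(n x, m))%:R :> R.
Proof.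
move=> lt_nM; rewrite count_sum natr_sum.
rewrite (eq_big_seq (fun x => \sum_(0 <= m < M) (-1) ^+ (m + k) * 'C(m, k)%:R * 'C(n x, m)%:R)).
  by rewrite exchange_big; apply: eq_bigr => m _; rewrite natr_sum mulr_sumr.
by move=> x /lt_nM /alternating_binomial ->.
Qed.

End BinomialInversion.

Fixpoint bitseqs (n : nat) : seq bitseq :=
  if n is n'.+1 then map (cons true) (bitseqs n') ++ map (cons false) (bitseqs n')
  else [:: [::]].

Lemma count_bitseqsS (P : pred bitseq) n :
  count P (bitseqs n.+1) =
  count (fun u => P (true :: u)) (bitseqs n) + count (fun u => P (false :: u)) (bitseqs n).
Proof. by rewrite /= count_cat !count_map. Qed.

Lemma cons_inj T (x : T) : injective (cons x).
Proof. by move=> u v []. Qed.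

Lemma mem_bitseqs n u : (u \in bitseqs n) = (size u == n).
Proof.
have notin_map b b' (r : seq bitseq) v : b != b' -> (b :: v \in map (cons b') r) = false.
  by move=> neq; apply/mapP => -[w _ [eq_bb' _]]; rewrite eq_bb' eqxx in neq.
elim: n u => [|n IHn] [|b u] //=; rewrite mem_cat.
  by apply/negbTE; rewrite negb_or; apply/andP; split; apply/mapP => -[].
case: b; first by rewrite (mem_map (@cons_inj _ true)) notin_map ?orbF ?IHn.
by rewrite (mem_map (@cons_inj _ false)) notin_map ?IHn.
Qed.

Lemma uniq_bitseqs n : uniq (bitseqs n).
Proof.
elim: n => [|n IHn] //=; rewrite cat_uniq !map_inj_uniq ?IHn ?andbT //; try exact: cons_inj.
by apply/hasPn => _ /mapP[u _ ->]; apply/mapP => -[].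
Qed.

Lemma big_tuple_bitseqs R (idx : R) (op : Monoid.com_law idx) n (F : bitseq -> R) :
  \big[op/idx]_(t : n.-tuple bool) F t = \big[op/idx]_(u <- bitseqs n) F u.
Proof.
rewrite -(big_map val xpredT); apply/perm_big/uniq_perm.
- by rewrite map_inj_uniq ?index_enum_uniq //; apply: val_inj.
- exact: uniq_bitseqs.
move=> u; rewrite mem_bitseqs; apply/mapP/eqP => [[t _ ->]|size_u]; first exact: size_tuple.
by exists (Tuple (introT eqP size_u)); rewrite ?mem_index_enum.
Qed.

Definition submask (a b : bitseq) : bool := all2 implb a b.

Lemma submask_cons x a y b : submask (x :: a) (y :: b) = (x ==> y) && submask a b.
Proof. by []. Qed.

Lemma bin_count_submask b m :
  'C(count id b, m) = count (fun a => (count id a == m) && submask a b) (bitseqs (size b)).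
Proof.
elim: b m => [|y b IHb] m; first by case: m.
rewrite count_bitseqsS /= -/(size b) -IHb.
case: y; last first.
  by rewrite [count _ (bitseqs _)](@eq_count _ _ pred0) ?count_pred0 // => u; case: (_ == _).
case: m => [|m]; first by rewrite [count _ (bitseqs _)](@eq_count _ _ pred0) ?count_pred0 ?bin0.
by rewrite add1n binS addnC IHb.
Qed.

(* [ballot L h] counts the words of length L that close h pending '(', i.e.
   the lattice paths of length L from height h down to 0 staying nonnegative. *)
Definition ballot (L h : nat) : nat := count (bal_aux h) (bitseqs L).

Lemma ballot0 h : ballot 0 h = (h == 0).
Proof. by case: h. Qed.

Lemma ballotS L h : ballot L.+1 h = ballot L h.+1 + (0 < h) * ballot L h.-1.
Proof.
rewrite /ballot count_bitseqsS; congr (_ + _).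
by case: h => [|h] /=; rewrite ?mul1n //; apply: count_pred0.
Qed.

Lemma ballot_small L h : L < h -> ballot L h = 0.
Proof.
elim: L h => [|L IHL] h lt_Lh; first by rewrite ballot0; case: h lt_Lh.
by rewrite ballotS !IHL ?muln0 //; lia.
Qed.

Lemma ballot_diag h : ballot h h = 1.
Proof. by elim: h => [|h IHh] //; rewrite ballotS ballot_small /= ?IHh. Qed.

Lemma ballot_reflection j h :
  ballot (2 * j + h) h + 'C(2 * j + h, j + h.+1) = 'C(2 * j + h, j).
Proof.
elim: j h => [|j IHj] h; first by rewrite ballot_diag bin_small ?bin0.
elim: h => [|h IHh].
  have := IHj 1; rewrite addn2 => IHj1.
  rewrite addn1 (_ : 2 * j.+1 + 0 = (2 * j + 1).+1); last by lia.
  by rewrite ballotS !binS mul0n addn0; lia.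
have IHj2 := IHj h.+2; rewrite (_ : 2 * j + h.+2 = 2 * j.+1 + h) in IHj2; last by lia.
rewrite addnS ballotS ltn0Sn mul1n; move: IHh IHj2; set L := 2 * j.+1 + h.
by clearbody L; rewrite succnK !addSn !addnS !binS; lia.
Qed.

Lemma ballot_catalan n : ballot (2 * n) 0 = catalan n.
Proof.
have := ballot_reflection n 0; rewrite !addn0 addn1 => refl.
have := mul_bin_left (2 * n) n; rewrite (_ : 2 * n - n = n) => [bin_succ|]; last by lia.
by rewrite /catalan (_ : 'C(2 * n, n) = ballot (2 * n) 0 * n.+1) ?mulnK //; nia.
Qed.

Fixpoint nonadjacent (a : bitseq) : bool :=
  if a is x :: a' then (x ==> ~~ head false a') && nonadjacent a' else true.

Lemma nonadjacent_count a : nonadjacent a -> 2 * count id a <= (size a).+1.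
Proof.
have [n] := ubnP (size a); elim: n a => // n IHn [|x a] //= lt_an /andP[x_sep sep_a].
case: x x_sep => /= [|_]; last by have := IHn a lt_an sep_a; lia.
case: a lt_an sep_a => [|[] a] //= lt_an sep_a _.
by have := IHn a (ltnW lt_an) sep_a; lia.
Qed.

Lemma count_nonadjacent n m :
  count (fun a => nonadjacent a && (count id a == m)) (bitseqs n) = 'C(n.+1 - m, m).
Proof.
elim/ltn_ind: n m => -[|[|n]] IHn m; [by case: m | by case: m => [|[|[|m]]] |].
rewrite count_bitseqsS [X in X + _]count_bitseqsS /= count_pred0 add0n.
rewrite (IHn n.+1) // -/(bitseqs n); case: m => [|m].
  by rewrite (@eq_count _ _ pred0) ?count_pred0 // => u; rewrite andbF.
rewrite (IHn n) // !subSS; case: (leqP m n.+1) => [le_mn | lt_nm].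
  by rewrite (subSn le_mn) binS addnC.
have [-> ->] : n.+1 - m = 0 /\ n.+2 - m = 0 by lia.
by rewrite !bin0n; case: m lt_nm.
Qed.

Lemma mkseq_cons T (f : nat -> T) n : mkseq f n.+1 = f 0 :: mkseq (f \o succn) n.
Proof. by rewrite /mkseq /= -(addn0 1) iotaDl -map_comp. Qed.

Definition peak (u : bitseq) (j : nat) : bool := nth false u j && ~~ nth false u j.+1.

Definition has_peaks (a u : bitseq) : bool := submask a (mkseq (peak u) (size a)).

Lemma has_peaks_cons x a u : has_peaks (x :: a) u = (x ==> peak u 0) && has_peaks a (behead u).
Proof.
rewrite /has_peaks [size _]/= mkseq_cons submask_cons; congr (_ && submask _ _).
by apply: eq_mkseq => j; rewrite /peak /= !nth_behead.
Qed.

Lemma submask_mkseq_and (a : bitseq) (f g : nat -> bool) :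
  submask a (mkseq (fun j => f j && g j) (size a)) =
  submask a (mkseq f (size a)) && submask a (mkseq g (size a)).
Proof.
elim: a f g => [|x a IHa] f g //; rewrite [size _]/= !mkseq_cons !submask_cons IHa.
by case: x (f 0) (g 0) => [] [] []; rewrite /= ?andbF.
Qed.

Lemma has_peaks_nonadjacent a u : has_peaks a u -> nonadjacent a.
Proof.
elim: a u => [|x a IHa] u //; rewrite has_peaks_cons => /andP[x_peak peaks_a] /=.
rewrite (IHa _ peaks_a) andbT; case: x x_peak => //= /andP[_ u1].
case: a peaks_a {IHa} => [|y a] //=; rewrite has_peaks_cons /peak /= nth_behead.
by case: y => //=; rewrite (negbTE u1).
Qed.

Lemma count_bal_peaks a L h : nonadjacent a -> size a < L ->
  count (fun u => bal_aux h u && has_peaks a u) (bitseqs L) = ballot (L - 2 * count id a) h.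
Proof.
have [n] := ubnP (size a); elim: n a L h => // n IHn [|x a] L h lt_an.
  by move=> _ _; rewrite muln0 subn0; apply: eq_count => u; rewrite andbT.
move=> /= /andP[x_sep sep_a]; case: L => // L lt_aL.
rewrite count_bitseqsS; under eq_count do rewrite has_peaks_cons.
under [X in _ + X]eq_count do rewrite has_peaks_cons.
case: x lt_an x_sep => /= lt_an => [head_a|_].
  (* The prescribed "()" does not change the height, so it can be deleted. *)
  rewrite [X in _ + X](@eq_count _ _ pred0) ?count_pred0 ?addn0; last by move=> u; rewrite andbF.
  case: L lt_aL => // L lt_aL.
  rewrite count_bitseqsS [X in X + _](@eq_count _ _ pred0) ?count_pred0 ?add0n; last first.
    by move=> u; rewrite /peak /= andbF.
  case: a head_a sep_a lt_aL lt_an => [|[] a] //= _ sep_a lt_aL lt_an.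
    rewrite (_ : L.+2 - 2 * (1 + 0) = L); last by lia.
    by apply: eq_count => u; rewrite /= andbT.
  under eq_count do rewrite has_peaks_cons.
  by rewrite /= IHn //; [congr ballot; lia | lia].
have IH h' : count (fun u => bal_aux h' u && has_peaks a u) (bitseqs L) =
             ballot (L - 2 * count id a) h' by exact: IHn.
have := nonadjacent_count _ sep_a => two_count_le.
rewrite IH add0n subSn; last by lia.
rewrite ballotS; congr (_ + _).
by case: h => [|h]; [exact: count_pred0 | rewrite mul1n -IH].
Qed.

Definition dyck (n : nat) : seq bitseq := [seq u <- bitseqs (2 * n) | balanced u].

Lemma mem_dyck n u : (u \in dyck n) = (size u == 2 * n) && balanced u.
Proof. by rewrite mem_filter mem_bitseqs andbC. Qed.

Lemma count_dyck_peaks s a : size a < 2 * s ->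
  count (has_peaks a) (dyck s) = nonadjacent a * catalan (s - count id a).
Proof.
move=> lt_as; rewrite count_filter; case: (boolP (nonadjacent a)) => [sep_a | adj_a].
  rewrite mul1n (eq_count (a2 := fun u => bal_aux 0 u && has_peaks a u)); last first.
    by move=> u; rewrite /= andbC.
  by rewrite count_bal_peaks // -mulnBr ballot_catalan.
rewrite (@eq_count _ _ pred0) ?count_pred0 // => u /=.
by apply/negP => /andP[/has_peaks_nonadjacent sep_a]; rewrite sep_a in adj_a.
Qed.

Lemma pierced_peaks u w j : j.+2 <= size u -> j.+3 <= size w ->
  pierced u w j.+1 = peak u j && peak (behead w) j.
Proof.
move=> lt_ju lt_jw; rewrite /pierced /upper_joined /lower_joined /matched /peak !nth_behead.
by rewrite lt_ju lt_jw !ltnSn !subSnn /= !take0 !eqb_id !eqbF_neg !andbT.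
Qed.

Lemma num_pierced_peaks s u w : size u = 2 * s -> size w = 2 * s ->
  num_pierced s u w = count id (mkseq (fun j => peak u j && peak (behead w) j) (2 * s - 2)).
Proof.
move=> size_u size_w; rewrite /num_pierced count_map -(addn0 1) iotaDl count_map.
apply: eq_in_count => j; rewrite mem_iota => /andP[_ lt_j].
by rewrite /= pierced_peaks // ?size_u ?size_w; lia.
Qed.

Lemma num_pierced_lt s u w : 0 < s -> num_pierced s u w < 2 * s.
Proof.
move=> s_gt0; have := count_size (pierced u w) (iota 1 (2 * s - 2)).
by rewrite size_iota /num_pierced; lia.
Qed.

Lemma bin_num_pierced s m u w : size u = 2 * s -> size w = 2 * s ->
  'C(num_pierced s u w, m) =
  count (fun a => [&& count id a == m, has_peaks a u & has_peaks (false :: a) w])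
        (bitseqs (2 * s - 2)).
Proof.
move=> size_u size_w; rewrite num_pierced_peaks // bin_count_submask size_mkseq.
apply: eq_in_count => a; rewrite mem_bitseqs => /eqP <-.
by rewrite submask_mkseq_and has_peaks_cons.
Qed.

Lemma sum_bin_num_pierced s m : 0 < s ->
  \sum_(u <- dyck s) \sum_(w <- dyck s) 'C(num_pierced s u w, m) = O s m.
Proof.
move=> s_gt0; set n := 2 * s - 2.
transitivity (\sum_(a <- bitseqs n) (count id a == m) *
                (count (has_peaks a) (dyck s) * count (has_peaks (false :: a)) (dyck s))).
  rewrite (eq_big_seq (fun u => \sum_(w <- dyck s) \sum_(a <- bitseqs n)
             (count id a == m) * (has_peaks a u * has_peaks (false :: a) w))); last first.
    move=> u; rewrite mem_dyck => /andP[/eqP size_u _]; apply: eq_big_seq => w.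
    rewrite mem_dyck => /andP[/eqP size_w _]; rewrite bin_num_pierced // count_sum.
    by apply: eq_bigr => a _; case: (_ == m); case: has_peaks; case: has_peaks.
  under eq_bigr do rewrite exchange_big.
  rewrite exchange_big; apply: eq_bigr => a _.
  rewrite !(count_sum _ (has_peaks _)) big_distrl big_distrr.
  by apply: eq_bigr => u _; rewrite !big_distrr.
rewrite (eq_big_seq (fun a => (nonadjacent a && (count id a == m)) * catalan (s - m) ^ 2)).
  by rewrite -big_distrl -count_sum count_nonadjacent /O /n; congr (binomial _ _ * _); lia.
move=> a; rewrite mem_bitseqs => /eqP size_a.
rewrite !count_dyck_peaks /= ?size_a; try lia.
by rewrite add0n; case: eqP => [->|_]; case: nonadjacent; rewrite ?mul1n ?mul0n ?muln0 ?mulnn.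
Qed.

Lemma E_count s k :
  E s k = count (fun uw => num_pierced s uw.1 uw.2 == k) [seq (u, w) | u <- dyck s, w <- dyck s].
Proof.
rewrite /E /dyck cardsE -sum1_card count_sum big_allpairs big_filter.
under [in RHS]eq_bigr do rewrite big_filter big_mkcond -big_tuple_bitseqs.
rewrite big_mkcond -big_tuple_bitseqs big_mkcond.
rewrite -(pair_bigA _ (fun u w : (2 * s).-tuple bool =>
  if [&& pstring s u, pstring s w & num_pierced s u w == k] then 1 else 0)).
apply: eq_bigr => u _; rewrite /pstring size_tuple eqxx /=.
case: balanced; last by rewrite big1.
by apply: eq_bigr => w _; rewrite size_tuple eqxx; case: balanced.
Qed.

Lemma O_eq0 s m : s < m -> O s m = 0.
Proof. by move=> lt_sm; rewrite /O bin_small //; lia. Qed.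

Local Open Scope ring_scope.

Theorem lemma3p4 (s k : nat) (hs : (1 <= s)%N) (hk : (k <= s)%N) :
  (E s k)%:Z = \sum_(k <= m < s.+1) (-1) ^+ (m + k) * ('C(m, k))%:Z * (O s m)%:Z.
Proof.
have np_lt : {in [seq (u, w) | u <- dyck s, w <- dyck s],
               forall uw, num_pierced s uw.1 uw.2 < 2 * s}%N.
  by move=> uw _; apply: num_pierced_lt.
rewrite E_count -natz (@count_binomial_inversion _ _ _ _ _ _ np_lt).
under eq_bigr do rewrite big_allpairs sum_bin_num_pierced // !natz.
rewrite (big_cat_nat (n := k)) //; last by lia.
rewrite (big_cat_nat (n := s.+1) (m := k)) //; try lia.
rewrite /= [X in X + _]big1_seq ?add0r => [|m]; last first.
  by rewrite mem_index_iota => /andP[_ /andP[_ /bin_small ->]]; rewrite mulr0 mul0r.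
rewrite [X in _ + X]big1_seq ?addr0 // => m.
by rewrite mem_index_iota => /andP[_ /andP[/O_eq0 -> _]]; rewrite mulr0.
Qed.
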